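(* Let $\mathcal M=(N,\mathcal I)$ be a matroid, let $h\ge1$ be an integer, let $\mathcal M_h=(N,\mathcal I_h)$ be its $h$-fold union with rank function $r_h$. Let $Q\subseteq N$ and $e\in N\setminus Q$ satisfy $r_h(Q\cup\{e\})=r_h(Q)$. Then $e\in\mathrm{span}(D(Q,h))$.
   Context: The $h$-fold union $\mathcal M_h$ is the matroid on $N$ whose independent sets are the unions of $h$ independent sets of $\mathcal M$. $r$ is the rank function of $\mathcal M$, $\mathrm{span}(A)=\{f\in N: r(A\cup\{f\})=r(A)\}$, and $D(Q,\lambda)$ is the unique inclusion-wise maximal set among the maximizers of $|U|-\lambda r(U)$ over $U\subseteq Q$. *)

From mathcomp Require Import all_boot all_order all_algebra.
Set Implicit Arguments. Unset Strict Implicit. Unset Printing Implicit Defensive.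
Import GRing.Theory Num.Theory.

Section Matroids.
Variable N : finType.

Definition is_matroid (indep : pred {set N}) : Prop :=
  [/\ indep set0,
      (forall A B : {set N}, B \subset A -> indep A -> indep B) &
      (forall A B : {set N}, indep A -> indep B -> #|A| < #|B| ->
          exists2 x, x \in B :\: A & indep (x |: A))].

Definition mrank (indep : pred {set N}) (A : {set N}) : nat :=
  \max_(B : {set N} | (B \subset A) && indep B) #|B|.

Definition mspan (indep : pred {set N}) (A : {set N}) : {set N} :=
  [set f | mrank indep (f |: A) == mrank indep A].

Definition union_indep (h : nat) (indep : pred {set N}) : pred {set N} :=
  fun I => [exists F : {ffun 'I_h -> {set N}},
              [forall i, indep (F i)] && (I == \bigcup_(i < h) F i)].

Definition Dobj (indep : pred {set N}) (lam : nat) (U : {set N}) : int :=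
  (#|U|%:Z - (lam%:Z * (mrank indep U)%:Z))%R.

Definition is_D (indep : pred {set N}) (Q : {set N}) (lam : nat) (D : {set N}) : Prop :=
  [/\ D \subset Q,
      (forall U : {set N}, U \subset Q -> (Dobj indep lam U <= Dobj indep lam D)%R) &
      (forall U : {set N}, U \subset Q -> Dobj indep lam U = Dobj indep lam D ->
          D \subset U -> U = D)].

End Matroids.

(* Let D = D(Q, h) be the inclusion-maximal maximizer of |U| - h r(U) over
   U ⊆ Q.  Writing  b_Q(W) = |Q \ W| + h r(W), this D is the inclusion-maximal
   minimizer of b_Q over subsets of Q.  The proof rests on the matroid union
   theorem  r_h(X) = min_{W ⊆ X} b_X(W):
   - "≤" is direct: a union of h independent sets meets W in ≤ h r(W) elements;
   - "≥" follows from the weak min-max theorem for the intersection of two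
     matroids given by rank functions (Edmonds), applied on N × {0..h-1} to
     the direct sum of h copies of M and the partition matroid of the fibres;
     that theorem is proved by induction on the ground set, deleting and
     contracting one element.
   If e ∉ Q and r_h(Q + e) = r_h(Q), a minimizer U of b_{Q+e} must contain e
   and have r(U) = r(U - e); so U - e minimizes b_Q and spans e.  Since b_Q is
   submodular, every minimizer of b_Q lies inside D, and spans are monotone,
   hence e ∈ span(D). *)
Set Warnings "-notation-overridden,-ambiguous-paths".
From mathcomp Require Import all_boot all_order all_algebra.
From mathcomp Require Import zify.
Set Implicit Arguments. Unset Strict Implicit. Unset Printing Implicit Defensive.

Section RankFunctions.
Variable T : finType.
Implicit Types (A B E F I : {set T}) (r : {set T} -> nat).

Definition is_rank_fun r : Prop :=
  [/\ r set0 = 0, (forall A x, r (x |: A) <= (r A).+1),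
      (forall A B, A \subset B -> r A <= r B) &
      (forall A B, r (A :|: B) + r (A :&: B) <= r A + r B)].

Lemma rank_set1 r e : is_rank_fun r -> r [set e] <= 1.
Proof. by case=> R0 R1 _ _; have := R1 set0 e; rewrite setU0 R0. Qed.

Lemma rank_loop r e A : is_rank_fun r -> r [set e] = 0 -> r (e |: A) = r A.
Proof.
case=> _ _ R2 R3 re0; apply/anti_leq/andP; split; last exact: R2 (subsetUr _ _).
by have := R3 [set e] A; rewrite re0; lia.
Qed.

Lemma rank_span_mono r e A B : is_rank_fun r -> A \subset B ->
  r (e |: A) = r A -> r (e |: B) = r B.
Proof.
case=> _ _ R2 R3 sAB spanA; apply/anti_leq/andP; split; last exact: R2 (subsetUr _ _).
have := R3 (e |: A) B; rewrite -setUA (setUidPr sAB) spanA.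
have : r A <= r ((e |: A) :&: B) by rewrite R2 // subsetI subsetUr sAB.
lia.
Qed.

Definition contract r e : {set T} -> nat := fun A => r (e |: A) - r [set e].

Lemma contract_rank_fun r e : is_rank_fun r -> is_rank_fun (contract r e).
Proof.
case=> R0 R1 R2 R3; rewrite /contract.
have ge_e A : r [set e] <= r (e |: A) by rewrite R2 // sub1set setU11.
split.
- by rewrite setU0 subnn.
- move=> A x; rewrite setUCA; have := R1 (e |: A) x; have := ge_e A; lia.
- by move=> A B sAB; rewrite leq_sub2r // R2 // setUS.
- move=> A B; have := R3 (e |: A) (e |: B).
  rewrite -setUUr -setUIr.
  have := ge_e A; have := ge_e B; have := ge_e (A :|: B); have := ge_e (A :&: B); lia.
Qed.

Definition max_common_indep r1 r2 E I : Prop :=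
  [/\ I \subset E, r1 I = #|I|, r2 I = #|I| &
      exists A B, E \subset A :|: B /\ r1 A + r2 B <= #|I|].

Lemma max_common_indep_sym r1 r2 E I :
  max_common_indep r1 r2 E I -> max_common_indep r2 r1 E I.
Proof. by case=> sI i1 i2 [A [B [cov le]]]; split=> //; exists B, A; rewrite setUC addnC. Qed.

Lemma max_common_indep0 r1 r2 : is_rank_fun r1 -> is_rank_fun r2 ->
  max_common_indep r1 r2 set0 set0.
Proof.
case=> R10 _ _ _ [R20 _ _ _]; split; rewrite ?cards0 //.
by exists set0, set0; rewrite sub0set R10 R20.
Qed.

(* A loop of r1 can be added to the ground set: put it on the r1-side. *)
Lemma max_common_indep_loop r1 r2 e E I : is_rank_fun r1 -> r1 [set e] = 0 ->
  max_common_indep r1 r2 E I -> max_common_indep r1 r2 (e |: E) I.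
Proof.
move=> H1 e0 [sI i1 i2 [A [B [cov le]]]]; split=> //.
  by rewrite (subset_trans sI) ?subsetUr.
by exists (e |: A), B; rewrite rank_loop // -setUA setUS.
Qed.

Lemma cover_meet_join F A1 B1 A2 B2 :
  F \subset A1 :|: B1 -> F \subset A2 :|: B2 ->
  F \subset (A1 :&: A2) :|: (B1 :|: B2) /\ F \subset (A1 :|: A2) :|: (B1 :&: B2).
Proof.
move=> /subsetP c1 /subsetP c2; split; apply/subsetP=> x xF;
  move: (c1 x xF) (c2 x xF); rewrite !inE;
  by case: (x \in A1); case: (x \in A2); case: (x \in B1); case: (x \in B2).
Qed.

Lemma max_common_indep_of_covers r1 r2 E I A1 B1 A2 B2 :
  I \subset E -> r1 I = #|I| -> r2 I = #|I| ->
  E \subset A1 :|: B1 -> E \subset A2 :|: B2 ->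
  (r1 A1 + r2 B1) + (r1 A2 + r2 B2) <= (#|I| + #|I|).+1 ->
  max_common_indep r1 r2 E I.
Proof.
move=> sI i1 i2 c1 c2 le; split=> //.
case: (leqP (r1 A1 + r2 B1) #|I|) => [le1 | lt1]; first by exists A1, B1.
by exists A2, B2; split=> //; lia.
Qed.

(* Inductive step when e is a non-loop of both: combine the certificate for
   E (deletion of e) with the one for the contractions by e.  Uncrossing the
   two covers by submodularity bounds their total by |Id| + |Ic| + 2, and the
   larger of Id and e + Ic is certified by one of the uncrossed covers. *)
Lemma max_common_indep_extend r1 r2 e E Id Ic :
  is_rank_fun r1 -> is_rank_fun r2 -> r1 [set e] = 1 -> r2 [set e] = 1 ->
  e \notin E -> max_common_indep r1 r2 E Id ->
  max_common_indep (contract r1 e) (contract r2 e) E Ic ->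
  exists I, max_common_indep r1 r2 (e |: E) I.
Proof.
move=> [_ _ R12 R13] [_ _ R22 R23] e1 e2 eE [sId d1 d2 [Ad [Bd [covd bd]]]].
case=> sIc c1 c2 [Ac [Bc [covc bc]]]; rewrite /contract e1 e2 in c1 c2 bc.
have ge1 Z : 1 <= r1 (e |: Z) /\ 1 <= r2 (e |: Z).
  by rewrite -{1}e1 -e2 R12 ?R22 // sub1set setU11.
have cIc : #|e |: Ic| = #|Ic|.+1 by rewrite cardsU1 (contraNN (subsetP sIc e) eE).
have covc' : E \subset (e |: Ac) :|: (e |: Bc).
  by rewrite (subset_trans covc) // setUSS // subsetUr.
have [cov1 cov2] := cover_meet_join covd covc'.
have cov1' : e |: E \subset (Ad :&: (e |: Ac)) :|: (Bd :|: (e |: Bc)).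
  by rewrite subUset cov1 andbT sub1set !inE eqxx !orbT.
have cov2' : e |: E \subset (Ad :|: (e |: Ac)) :|: (Bd :&: (e |: Bc)).
  by rewrite subUset cov2 andbT sub1set !inE eqxx !orbT.
have s1 := R13 Ad (e |: Ac); have s2 := R23 Bd (e |: Bc).
have [ge1A _] := ge1 Ac; have [_ ge1B] := ge1 Bc; have [ge1I1 ge1I2] := ge1 Ic.
case: (leqP #|Id| #|Ic|) => [le_dc | lt_cd].
  exists (e |: Ic); apply: (max_common_indep_of_covers _ _ _ cov1' cov2').
  - by rewrite setUS.
  - by rewrite cIc; lia.
  - by rewrite cIc; lia.
  - by rewrite cIc; lia.
exists Id; apply: (max_common_indep_of_covers _ _ _ cov1' cov2') => //.
- by rewrite (subset_trans sId) ?subsetUr.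
- lia.
Qed.

Theorem rank_intersection r1 r2 E : is_rank_fun r1 -> is_rank_fun r2 ->
  exists I, max_common_indep r1 r2 E I.
Proof.
have [n] := ubnP #|E|; elim: n E r1 r2 => // n IH E r1 r2 ltE H1 H2.
case: (set_0Vmem E) => [-> | [e eE]]; first by exists set0; apply: max_common_indep0.
rewrite -(setD1K eE); have eE' : e \notin E :\ e by rewrite !inE eqxx.
have ltE' : #|E :\ e| < n by move: ltE; rewrite (cardsD1 e E) eE.
have [Id HId] := IH _ r1 r2 ltE' H1 H2.
case: (eqVneq (r1 [set e]) 0) => [l1 | nl1].
  by exists Id; apply: max_common_indep_loop.
case: (eqVneq (r2 [set e]) 0) => [l2 | nl2].
  by exists Id; apply/max_common_indep_sym/max_common_indep_loop/max_common_indep_sym.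
have e1 : r1 [set e] = 1 by have := rank_set1 e H1; lia.
have e2 : r2 [set e] = 1 by have := rank_set1 e H2; lia.
have [Ic HIc] := IH _ _ _ ltE' (contract_rank_fun e H1) (contract_rank_fun e H2).
exact: max_common_indep_extend HId HIc.
Qed.

End RankFunctions.

Section MatroidRank.
Variable N : finType.
Variable indep : pred {set N}.
Hypothesis indep_matroid : is_matroid indep.
Local Notation r := (mrank indep).
Implicit Types A B K X : {set N}.

Lemma indep_le_rank A B : B \subset A -> indep B -> #|B| <= r A.
Proof. by move=> sBA iB; apply: leq_bigmax_cond; rewrite sBA. Qed.

Lemma rank_le_card A : r A <= #|A|.
Proof. by apply/bigmax_leqP => B /andP [sBA _]; apply: subset_leq_card. Qed.

Lemma rank_basis A : exists2 B : {set N}, (B \subset A) && indep B & #|B| = r A.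
Proof.
case: indep_matroid => indep0 _ _.
have P0 : (set0 \subset A) && indep set0 by rewrite sub0set indep0.
rewrite /mrank (@bigmax_eq_arg _ set0 (fun B => (B \subset A) && indep B) _ P0).
by case: arg_maxnP => // B PB _; exists B.
Qed.

Lemma indep_of_rank A : r A = #|A| -> indep A.
Proof.
have [B /andP [sBA iB] <- cB] := rank_basis A.
suff -> : A = B by [].
by apply/eqP; rewrite eq_sym eqEcard sBA cB leqnn.
Qed.

Lemma rank_le_maximal X K : K \subset X -> indep K ->
  (forall x, x \in X -> x \notin K -> ~~ indep (x |: K)) -> r X <= #|K|.
Proof.
move=> sKX iK maxK; have [B /andP [sBX iB] <-] := rank_basis X.
rewrite leqNgt; apply/negP => ltKB.
case: indep_matroid => _ _ augment.
have [x] := augment K B iK iB ltKB; rewrite inE => /andP [xK xB] ixK.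
by have := maxK x (subsetP sBX x xB) xK; rewrite ixK.
Qed.

(* Submodularity: extend a basis J of A ∩ B to a maximal independent K in
   A ∪ B and count K ∩ A and K ∩ B. *)
Lemma rank_submod A B : r (A :|: B) + r (A :&: B) <= r A + r B.
Proof.
have [J /andP [sJ iJ] <-] := rank_basis (A :&: B).
case: indep_matroid => _ indep_sub _.
pose P K := [&& J \subset K, K \subset A :|: B & indep K].
have PJ : P J by rewrite /P subxx iJ (subset_trans sJ) // subIset // subsetUl.
have [K /and3P [sJK sK iK] maxK] := arg_maxnP (fun K => #|K|) PJ.
have rAB : r (A :|: B) <= #|K|.
  apply: rank_le_maximal => // x xAB xK; apply: contraTN isT => ixK.
  have := maxK (x |: K); rewrite /P ixK subUset sub1set xAB sK.
  by rewrite (subset_trans sJK (subsetUr _ _)) cardsU1 xK => /(_ isT); lia.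
have rA : #|K :&: A| <= r A by rewrite indep_le_rank ?subsetIr // (indep_sub K) ?subsetIl.
have rB : #|K :&: B| <= r B by rewrite indep_le_rank ?subsetIr // (indep_sub K) ?subsetIl.
have cJ : #|J| <= #|(K :&: A) :&: (K :&: B)|.
  by rewrite subset_leq_card // -setIIr subsetI sJK.
have := cardsUI (K :&: A) (K :&: B); rewrite -setIUr (setIidPl sK).
lia.
Qed.

Lemma mrank_is_rank_fun : is_rank_fun r.
Proof.
split.
- by apply/eqP; rewrite -leqn0 -(cards0 N) rank_le_card.
- move=> A x; have [B /andP [sB iB] <-] := rank_basis (x |: A).
  case: indep_matroid => _ indep_sub _.
  have sB' : B :\ x \subset A by rewrite subDset.
  have := indep_le_rank sB' (indep_sub _ _ (subsetDl B [set x]) iB).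
  by rewrite (cardsD1 x B); case: (x \in B) => /=; lia.
- move=> A B sAB; have [C /andP [sC iC] <-] := rank_basis A.
  exact: indep_le_rank (subset_trans sC sAB) iC.
- exact: rank_submod.
Qed.

Lemma mspan_mono A B (e : N) : A \subset B -> e \in mspan indep A -> e \in mspan indep B.
Proof. by rewrite !inE => sAB /eqP spanA; apply/eqP; apply: rank_span_mono mrank_is_rank_fun sAB spanA. Qed.

End MatroidRank.

Lemma card_bigcup_le (T : finType) n (A : 'I_n -> {set T}) :
  #|\bigcup_(i < n) A i| <= \sum_(i < n) #|A i|.
Proof.
elim/big_ind2: _ => [|a X b Y leX leY|//]; first by rewrite cards0.
by have := cardsUI X Y; lia.
Qed.

Lemma eq_sum_leq n (f g : 'I_n -> nat) :
  (forall i, f i <= g i) -> \sum_(i < n) f i = \sum_(i < n) g i -> forall i, f i = g i.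
Proof.
move=> le_fg /eqP; rewrite (leqif_sum (fun i _ => leqif_eq (le_fg i))) => /forallP eq_fg i.
exact/eqP/(implyP (eq_fg i)).
Qed.

Section MatroidUnion.
Variable N : finType.
Variable indep : pred {set N}.
Hypothesis indep_matroid : is_matroid indep.
Variable h : nat.
Local Notation r := (mrank indep).
Local Notation rh := (mrank (union_indep h indep)).
Implicit Types X U V W : {set N}.

Definition union_bound X W : nat := #|X :\: W| + h * r W.

Lemma union_rank_le X W : rh X <= union_bound X W.
Proof.
apply/bigmax_leqP => J /andP [sJX /existsP [F /andP [/forallP indepF /eqP defJ]]].
rewrite /union_bound -(cardsID W J) addnC leq_add ?subset_leq_card ?setSD //.
have sJW : J :&: W \subset \bigcup_(i < h) (F i :&: W).
  apply/subsetP => x; rewrite inE defJ => /andP [/bigcupP [i _ xFi] xW].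
  by apply/bigcupP; exists i; rewrite ?inE ?xFi.
apply: leq_trans (subset_leq_card sJW) (leq_trans (card_bigcup_le _) _).
have -> : h * r W = \sum_(i < h) r W by rewrite sum_nat_const card_ord.
apply: leq_sum => i _; case: indep_matroid => _ indep_sub _.
by rewrite indep_le_rank ?subsetIr // (indep_sub (F i)) ?subsetIl.
Qed.

(* On N × 'I_h: the i-th fibre of a set, the rank of the direct sum of h copies
   of the matroid, and the rank of the partition matroid with one element per
   fibre {x} × 'I_h. *)
Definition slice (A : {set N * 'I_h}) (i : 'I_h) : {set N} := [set x | (x, i) \in A].
Definition copies_rank (A : {set N * 'I_h}) : nat := \sum_(i < h) r (slice A i).
Definition shadow_rank (A : {set N * 'I_h}) : nat := #|[set p.1 | p in A]|.

Lemma copies_rank_is_rank_fun : is_rank_fun copies_rank.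
Proof.
case: (mrank_is_rank_fun indep_matroid) => R0 R1 R2 R3.
split.
- rewrite /copies_rank big1 // => i _.
  by have -> : slice set0 i = set0 by apply/setP => x; rewrite !inE.
- move=> A [y j]; rewrite /copies_rank (bigD1 j) //= [X in _ <= X.+1](bigD1 j) //=.
  have -> : slice ((y, j) |: A) j = y |: slice A j.
    by apply/setP => x; rewrite !inE xpair_eqE eqxx andbT.
  rewrite (eq_bigr (fun i => r (slice A i))); first by have := R1 (slice A j) y; lia.
  move=> i ij; congr r; apply/setP => x; rewrite !inE xpair_eqE.
  by rewrite (negbTE ij) andbF.
- move=> A B sAB; apply: leq_sum => i _; apply: R2; apply/subsetP => x; rewrite !inE.
  exact: (subsetP sAB).
- move=> A B; rewrite /copies_rank -!big_split /=; apply: leq_sum => i _.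
  have -> : slice (A :|: B) i = slice A i :|: slice B i by apply/setP => x; rewrite !inE.
  have -> : slice (A :&: B) i = slice A i :&: slice B i by apply/setP => x; rewrite !inE.
  exact: R3.
Qed.

Lemma shadow_rank_is_rank_fun : is_rank_fun shadow_rank.
Proof.
split.
- by rewrite /shadow_rank imset0 cards0.
- by move=> A x; rewrite /shadow_rank imsetU1 cardsU1; case: (_ \notin _).
- by move=> A B sAB; rewrite /shadow_rank subset_leq_card ?imsetS.
- move=> A B; rewrite /shadow_rank imsetU -[#|[set p.1 | p in A]| + _]cardsUI leq_add2l subset_leq_card //.
  by rewrite subsetI !imsetS ?subsetIl ?subsetIr.
Qed.

Lemma card_slices (I : {set N * 'I_h}) : #|I| = \sum_(i < h) #|slice I i|.
Proof.
rewrite -sum1_card (partition_big (fun p : N * 'I_h => p.2) xpredT) //=.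
apply: eq_bigr => i _; rewrite sum1dep_card.
have -> : [set x | (x \in I) && (x.2 == i)] = (fun y => (y, i)) @: slice I i.
  apply/setP => [[x j]]; rewrite !inE /=; apply/idP/imsetP.
    by case/andP => xI /eqP eji; subst; exists x; rewrite ?inE.
  by case=> y; rewrite inE => yI [-> ->]; rewrite yI eqxx.
by apply: card_imset => a b [].
Qed.

(* Hard half of the matroid union theorem: a common independent set I of the
   two matroids on N × 'I_h projects injectively onto a union of h independent
   sets, and the certificate cover (A, B) yields a set U with b_X(U) <= |I|. *)
Lemma union_rank_attained X : exists2 U : {set N}, U \subset X & union_bound X U <= rh X.
Proof.
set E := [set p : N * 'I_h | p.1 \in X].
have [I [sIE copiesI shadowI [A [B [cov bnd]]]]] :=
  rank_intersection E copies_rank_is_rank_fun shadow_rank_is_rank_fun.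
have slice_indep i : indep (slice I i).
  apply: indep_of_rank => //; move: i; apply: eq_sum_leq => [i|].
    exact: rank_le_card.
  by rewrite -card_slices.
have union_indepI : union_indep h indep [set p.1 | p in I].
  apply/existsP; exists [ffun i => slice I i]; apply/andP; split.
    by apply/forallP => i; rewrite ffunE.
  apply/eqP/setP => x; apply/imsetP/bigcupP.
    by case=> [[y i]] yI ->; exists i => //; rewrite ffunE inE.
  by case=> i _; rewrite ffunE inE => xi; exists (x, i).
have sIX : [set p.1 | p in I] \subset X.
  by apply/subsetP => x /imsetP [p /(subsetP sIE)]; rewrite inE => ? ->.
have rhI : #|I| <= rh X by rewrite -shadowI; apply: leq_bigmax_cond; rewrite sIX.
set U := [set x in X | [forall i, (x, i) \in A]].
exists U; first by apply/subsetP => x; rewrite inE => /andP [].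
apply: leq_trans rhI; apply: leq_trans bnd; rewrite /union_bound addnC leq_add //.
  have -> : h * r U = \sum_(i < h) r U by rewrite sum_nat_const card_ord.
  apply: leq_sum => i _.
  case: (mrank_is_rank_fun indep_matroid) => _ _ R2 _; apply: R2; apply/subsetP => x.
  by rewrite !inE => /andP [_ /forallP /(_ i)].
rewrite /shadow_rank subset_leq_card //; apply/subsetP => x.
rewrite !inE negb_and => /andP [/orP [xX | /forallPn [i xiA]] xX']; first by rewrite xX' in xX.
apply/imsetP; exists (x, i) => //.
by move: (subsetP cov (x, i)); rewrite !inE xX' (negbTE xiA) => /(_ isT).
Qed.

(* b_X is submodular, since |X \ W| is modular and r is submodular. *)
Lemma union_bound_submod X U V :
  union_bound X (U :|: V) + union_bound X (U :&: V) <= union_bound X U + union_bound X V.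
Proof.
rewrite /union_bound setDUr setDIr.
have := cardsUI (X :\: U) (X :\: V).
have : h * (r (U :|: V) + r (U :&: V)) <= h * (r U + r V).
  by rewrite leq_mul2l rank_submod ?orbT.
rewrite !mulnDr; lia.
Qed.

(* If adding e does not increase the union rank, some minimizer of b_Q spans e:
   a minimizer U of b_{Q+e} contains e and satisfies r(U) = r(U - e). *)
Lemma redundant_element_spanned (Q : {set N}) (e : N) : 0 < h -> e \notin Q -> rh (e |: Q) = rh Q ->
  exists2 U : {set N}, U \subset Q & (union_bound Q U <= rh Q) && (e \in mspan indep U).
Proof.
move=> h_gt0 eQ rh_eQ.
case: (mrank_is_rank_fun indep_matroid) => _ _ R2 _.
have [U sU] := union_rank_attained (e |: Q); rewrite rh_eQ /union_bound => minU.
have eU : e \in U.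
  apply: contraT => eU; have sUQ : U \subset Q by rewrite -(setU1K eQ) subsetD1 sU eU.
  have := union_rank_le Q U; rewrite /union_bound; move: minU.
  have -> : (e |: Q) :\: U = e |: (Q :\: U).
    by apply/setP => x; rewrite !inE; case: (eqVneq x e) => [->|]; rewrite ?(negbTE eU).
  by rewrite cardsU1 !inE (negbTE eQ) andbF /=; lia.
set U' := U :\ e; have defU : U = e |: U' by rewrite setD1K.
have sU'Q : U' \subset Q by rewrite subDset.
have eQU : (e |: Q) :\: U = Q :\: U'.
  by apply/setP => x; rewrite !inE; case: (eqVneq x e) => [->|]; rewrite ?eU ?(negbTE eQ).
rewrite eQU in minU; have ub := union_rank_le Q U'; rewrite /union_bound in ub.
have rU' : r U' <= r U by rewrite R2 // defU subsetUr.
have hrU : h * r U' <= h * r U by rewrite leq_mul2l rU' orbT.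
have le_rU : r U <= r U' by rewrite -(leq_pmul2l h_gt0); lia.
exists U' => //; apply/andP; split; first by rewrite /union_bound; lia.
by rewrite inE -defU eqn_leq le_rU rU'.
Qed.

End MatroidUnion.

Section MaximalMaximizer.
Variable N : finType.
Variable indep : pred {set N}.
Hypothesis indep_matroid : is_matroid indep.
Variables (h : nat) (Q D : {set N}).
Hypothesis D_spec : is_D indep Q h D.
Local Notation bound := (union_bound indep h Q).
Implicit Type U : {set N}.

Lemma Dobj_union_bound U : U \subset Q ->
  Dobj indep h U = (#|Q|%:Z - (bound U)%:Z)%R.
Proof.
move=> sUQ; rewrite /Dobj /union_bound cardsDS //.
have := subset_leq_card sUQ; lia.
Qed.

Lemma D_minimizes U : U \subset Q -> bound D <= bound U.
Proof.
case: D_spec => sDQ maxD _ sUQ; have := maxD U sUQ.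
rewrite !Dobj_union_bound //; lia.
Qed.

(* Every minimizer U of b_Q lies in D: by submodularity U ∪ D is a minimizer
   too, hence equals D by maximality. *)
Lemma minimizer_sub_D U : U \subset Q -> bound U <= bound D -> U \subset D.
Proof.
case: D_spec => sDQ _ maximalD sUQ minU.
have sUDQ : U :|: D \subset Q by rewrite subUset sUQ sDQ.
have sIQ : U :&: D \subset Q by rewrite subIset ?sUQ.
have := union_bound_submod indep_matroid h Q U D.
have := D_minimizes sUDQ; have := D_minimizes sIQ => minI minUD submod.
have -> : D = U :|: D.
  by apply/esym/maximalD; rewrite ?subsetUr // !Dobj_union_bound //; lia.
exact: subsetUl.
Qed.

End MaximalMaximizer.

Theorem lemmaA1 (N : finType) (indep : pred {set N}) (h : nat)
  (Q : {set N}) (e : N) (D : {set N}) :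
  is_matroid indep -> (1 <= h)%N ->
  e \notin Q ->
  mrank (union_indep h indep) (e |: Q) = mrank (union_indep h indep) Q ->
  is_D indep Q h D ->
  e \in mspan indep D.
Proof.
move=> indep_matroid h_gt0 eQ rh_eQ D_spec.
have [U sUQ /andP [minU spanU]] := redundant_element_spanned indep_matroid h_gt0 eQ rh_eQ.
have sUD : U \subset D.
  apply: (minimizer_sub_D indep_matroid D_spec sUQ).
  exact: leq_trans minU (union_rank_le indep_matroid h Q D).
exact: (mspan_mono indep_matroid sUD spanU).
Qed.
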